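(* Let $n\ge 3$ and let $C_n$ be the cycle on $n$ vertices. Then $$\tau(C_n)=\begin{cases}4 & \text{if } n\equiv 0 \pmod 4,\\ n & \text{if } n\equiv 1,3 \pmod 4,\\ \left(\frac n2\right)^2 & \text{if } n\equiv 2 \pmod 4.\end{cases}$$
   Context: A set $D \subseteq V(G)$ is a total dominating set of a graph $G$ if every vertex of $G$ has a neighbor in $D$. $\gamma_t(G)$ is the minimum cardinality of a total dominating set; a minimum one is a $\gamma_t(G)$-set, and $\tau(G)$ is the number of $\gamma_t(G)$-sets. *)

From mathcomp Require Import all_boot.
Set Implicit Arguments. Unset Strict Implicit.

(* A simple graph on a finite vertex type T is given by a (symmetric,
   irreflexive) adjacency relation adj : rel T. *)

Definition total_dominating (T : finType) (adj : rel T) (D : {set T}) : bool :=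
  [forall v : T, [exists u in D, adj v u]].

(* gamma_t(G): the minimum cardinality of a total dominating set.
   (If G has no total dominating set, e.g. an isolated vertex, the min over
   an empty family is taken to be #|T|; irrelevant for cycles.) *)
Definition gamma_t (T : finType) (adj : rel T) : nat :=
  \big[minn/#|T|]_(D : {set T} | total_dominating adj D) #|D|.

Definition gamma_t_set (T : finType) (adj : rel T) (D : {set T}) : bool :=
  total_dominating adj D && (#|D| == gamma_t adj).

Definition tau (T : finType) (adj : rel T) : nat :=
  #|[set D : {set T} | gamma_t_set adj D]|.

Definition cycle_adj (n : nat) : rel 'I_n :=
  fun i j => (j == (i.+1 %% n) :> nat) || (i == (j.+1 %% n) :> nat).
Arguments cycle_adj n : clear implicits.

From mathcomp Require Import all_boot zify.
Set Implicit Arguments. Unset Strict Implicit. Unset Printing Implicit Defensive.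

(* Vertex v + 1 of C_n is dominated exactly by v and v + 2, so D is a total
   dominating set iff its indicator, read along steps of 2, never has two
   consecutive zeros ("covering").  For odd n the step-2 walk 0, 2, 4, ... visits
   every vertex once; for n = 2m it splits into the two m-cycles of even and of
   odd vertices.  So tau(C_n) counts the minimum covering sequences of period n,
   resp. the pairs of minimum covering sequences of period m.
   For a covering sequence of period m, 2 * weight = m + #(pairs of consecutive
   ones), so the weight is at least ceil(m/2), with equality iff there is no such
   pair (m even: the 2 alternating sequences) or exactly one (m odd: the m
   rotations of 1010...101). *)

Definition periodic (m : nat) (f : nat -> bool) := forall k, f k = f (k %% m).
Definition covering (f : nat -> bool) := forall k, f k || f k.+1.
Definition weight (m : nat) (f : nat -> bool) := \sum_(k < m) (f k : nat).
Definition alt_cover (a : bool) (k : nat) := a (+) odd k.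

Definition min_cover (m : nat) (f : nat -> bool) :=
  [/\ periodic m f, covering f & weight m f = uphalf m].

Definition min_cover_enum (m : nat) (I : finType) (Phi : I -> nat -> bool) :=
  [/\ forall i, min_cover m (Phi i),
      forall i j, Phi i =1 Phi j -> i = j &
      forall f, min_cover m f -> exists i, f =1 Phi i].

Lemma geq_bigmin_cond (I : finType) (P : pred I) (F : I -> nat) x j :
  P j -> \big[minn/x]_(i | P i) F i <= F j.
Proof.
move=> Pj; have : j \in index_enum I by rewrite mem_index_enum.
elim: (index_enum I) => [//|i r IHr]; rewrite inE big_cons.
case/orP => [/eqP <-|jr]; first by rewrite Pj geq_minl.
by case: (P i); rewrite ?geq_min IHr ?orbT.
Qed.

Lemma sum_even_ord m : \sum_(k < m) (~~ odd k : nat) = uphalf m.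
Proof.
elim: m => [|m IHm]; first by rewrite big_ord0.
by rewrite big_ord_recr /= IHm uphalf_half; case: (odd m); lia.
Qed.

Lemma sum_ord_double m (g : nat -> nat) :
  \sum_(v < m.*2) g v = \sum_(k < m) g (2 * k) + \sum_(k < m) g (2 * k).+1.
Proof.
elim: m => [|m IHm]; first by rewrite !big_ord0.
by rewrite doubleS !big_ord_recr /= IHm -mul2n -!addnA; congr (_ + _); apply: addnCA.
Qed.

Lemma modn_succ m k : 0 < m -> k.+1 %% m = if k %% m == m.-1 then 0 else (k %% m).+1.
Proof.
move=> m_gt0; rewrite -addn1 -modnDml addn1; have := ltn_pmod k m_gt0.
case: eqP => [-> _|ne lt_km]; first by rewrite prednK ?modnn.
by rewrite modn_small; lia.
Qed.

Lemma covering_alternate f s t : covering f ->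
  (forall u, u < t -> ~~ (f (s + u) && f (s + u).+1)) -> f (s + t) = f s (+) odd t.
Proof.
move=> Cf; elim: t => [|t IHt] nopair; first by rewrite addn0 addbF.
have {}IHt : f (s + t) = f s (+) odd t by apply: IHt => u ut; apply/nopair/ltnW.
have := nopair t (ltnSn t); have := Cf (s + t).
by rewrite addnS IHt /= addbN; case: (f s (+) odd t); case: (f _).
Qed.

Section PeriodicCovers.
Variable m : nat.
Implicit Type f : nat -> bool.

Lemma periodic_eqmod f x y : periodic m f -> x = y %[mod m] -> f x = f y.
Proof. by move=> Pf E; rewrite Pf E -Pf. Qed.

Lemma periodic_shift f s : periodic m f -> periodic m (fun k => f (k + s)).
Proof. by move=> Pf k; apply: periodic_eqmod Pf _; rewrite modnDml. Qed.

Lemma pair_mod f k : periodic m f -> (f k && f k.+1) = (f (k %% m) && f (k %% m).+1).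
Proof.
move=> Pf; rewrite -Pf; congr (_ && _); apply: periodic_eqmod Pf _.
by rewrite -addn1 -[(k %% m).+1]addn1 modnDml.
Qed.

Lemma weight_succ f : periodic m f -> \sum_(k < m) (f k.+1 : nat) = weight m f.
Proof.
move=> Pf; have Em : f m = f 0 by rewrite Pf modnn.
have := erefl (\sum_(k < m.+1) (f k : nat)).
by rewrite {1}big_ord_recr big_ord_recl /= Em addnC => /addnI.
Qed.

Lemma weight_shift f s : periodic m f -> \sum_(k < m) (f (k + s) : nat) = weight m f.
Proof.
move=> Pf; elim: s => [|s IHs]; first by apply: eq_bigr => k _; rewrite addn0.
rewrite -IHs -[RHS](weight_succ (periodic_shift s Pf)).
by apply: eq_bigr => k _; rewrite addSnnS.
Qed.

Lemma covering_weightE f : periodic m f -> covering f ->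
  2 * weight m f = m + \sum_(k < m) (f k && f k.+1 : nat).
Proof.
move=> Pf Cf; rewrite mul2n -addnn -{2}(weight_succ Pf) -big_split /=.
transitivity (\sum_(k < m) (1 + (f k && f k.+1))).
  by apply: eq_bigr => k _; move: (Cf k); case: (f k); case: (f k.+1).
by rewrite big_split sum_nat_const card_ord muln1.
Qed.

Lemma covering_weight_lb f : periodic m f -> covering f -> uphalf m <= weight m f.
Proof.
move=> Pf Cf; have := covering_weightE Pf Cf.
rewrite uphalf_half; have := odd_double_half m; lia.
Qed.

Lemma min_cover_pairs f : min_cover m f ->
  \sum_(k < m) (f k && f k.+1 : nat) = odd m.
Proof.
case=> Pf Cf Wf; have := covering_weightE Pf Cf; rewrite Wf uphalf_half.
have := odd_double_half m; lia.
Qed.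

Lemma min_cover_even f : 0 < m -> ~~ odd m -> min_cover m f -> f =1 alt_cover (f 0).
Proof.
move=> m_gt0 /negbTE m_even mf k; have [Pf Cf _] := mf.
have := min_cover_pairs mf; rewrite m_even => /eqP.
rewrite sum_nat_eq0 => /forallP nopair.
rewrite -[k]add0n covering_alternate // => u _.
by rewrite pair_mod //; have := nopair (Ordinal (ltn_pmod u m_gt0)); case: (_ && _).
Qed.

End PeriodicCovers.

Section OddPeriod.
Variable m : nat.
Hypothesis m_odd : odd m.
Let m_gt0 : 0 < m := odd_gt0 m_odd.
Implicit Type f : nat -> bool.

(* For odd [m], [odd_cover i] is true at [i, i + 2, ..., i + m - 1 = i - 1 (mod m)];
   its only pair of consecutive [true] values sits at [i - 1, i]. *)
Definition odd_cover i k := ~~ odd ((k + (m - i)) %% m).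

Lemma odd_cover_periodic i : periodic m (odd_cover i).
Proof. by move=> k; rewrite /odd_cover modnDml. Qed.

Lemma odd_cover_succ i k :
  odd_cover i k.+1 = if (k + (m - i)) %% m == m.-1 then true else ~~ odd_cover i k.
Proof.
rewrite /odd_cover addSn modn_succ //.
by case: eqP => //= ->; rewrite -(odd_halfK m_odd) odd_double.
Qed.

Lemma odd_cover_covering i : covering (odd_cover i).
Proof. by move=> k; rewrite odd_cover_succ; case: ifP; rewrite ?orbT ?orbN. Qed.

Lemma odd_cover_pairE i k : i <= m ->
  (odd_cover i k && odd_cover i k.+1) = (k.+1 == i %[mod m]).
Proof.
move=> le_im; rewrite -(eqn_modDr (m - i)) addSn subnKC // modnn modn_succ //.
rewrite odd_cover_succ /odd_cover; case: eqP => [->|_]; last by rewrite andbN.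
by rewrite -(odd_halfK m_odd) odd_double.
Qed.

Lemma odd_cover_inj i j : i < m -> j < m -> odd_cover i =1 odd_cover j -> i = j.
Proof.
move=> lt_im lt_jm eq_ij.
have := odd_cover_pairE (i + m.-1) (ltnW lt_im).
rewrite !eq_ij odd_cover_pairE ?(ltnW lt_jm) // -addnS prednK // modnDr eqxx.
by rewrite !modn_small // => /eqP.
Qed.

Lemma odd_cover_weight i : i <= m -> weight m (odd_cover i) = uphalf m.
Proof.
move=> le_im; rewrite -(weight_shift i (odd_cover_periodic i)) -sum_even_ord.
apply: eq_bigr => k _; rewrite /odd_cover -addnA subnKC // modnDr.
by rewrite modn_small.
Qed.

Lemma min_cover_odd f : min_cover m f -> exists2 i, i < m & f =1 odd_cover i.
Proof.
move=> mf; have [Pf Cf _] := mf; have := min_cover_pairs mf; rewrite m_odd.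
have [j pair_j|nopair] := pickP (fun k : 'I_m => f k && f k.+1); last first.
  by rewrite big1 // => k _; rewrite nopair.
rewrite (bigD1 j) //= pair_j add1n => /eqP; rewrite eqSS sum_nat_eq0 => /forallP nopair.
have nopair_mod k : k %% m != j -> ~~ (f k && f k.+1).
  move=> ne_kj; rewrite (pair_mod k Pf); have := nopair (Ordinal (ltn_pmod k m_gt0)).
  by rewrite -val_eqE /= ne_kj /=; case: (_ && _).
have alternate t : t < m -> f (j.+1 + t) = ~~ odd t.
  move=> lt_tm; rewrite covering_alternate //; first by case/andP: pair_j => _ ->.
  move=> u lt_ut; apply: nopair_mod.
  have : j + u.+1 != j + 0 %[mod m].
    by rewrite eqn_modDl mod0n modn_small //; apply: leq_ltn_trans lt_ut lt_tm.
  by rewrite addn0 addSnnS (modn_small (ltn_ord j)).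
exists (j.+1 %% m); first exact: ltn_pmod.
move=> k; rewrite /odd_cover -alternate ?ltn_pmod //; apply: periodic_eqmod Pf _.
have le_im : j.+1 %% m <= m by apply/ltnW/ltn_pmod.
rewrite modnDmr -modnDml addnA (addnC (_ %% m)) -addnA subnKC //.
by rewrite modnDr.
Qed.

Lemma odd_cover_enum : min_cover_enum m (fun i : 'I_m => odd_cover i).
Proof.
split.
- move=> i; split; [exact: odd_cover_periodic | exact: odd_cover_covering |].
  exact/odd_cover_weight/ltnW.
- by move=> i j /(odd_cover_inj (ltn_ord i) (ltn_ord j)) /val_inj.
- by move=> f /min_cover_odd [i lt_im fE]; exists (Ordinal lt_im).
Qed.

End OddPeriod.

Section EvenPeriod.
Variable m : nat.
Hypotheses (m_gt0 : 0 < m) (m_even : ~~ odd m).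

Lemma alt_cover_periodic a : periodic m (alt_cover a).
Proof. by move=> k; rewrite /alt_cover odd_mod // (negbTE m_even). Qed.

Lemma alt_cover_covering a : covering (alt_cover a).
Proof. by move=> k; rewrite /alt_cover /= addbN orbN. Qed.

Lemma alt_cover_weight a : weight m (alt_cover a) = uphalf m.
Proof.
rewrite -sum_even_ord; case: a; first exact: eq_bigr.
rewrite -(weight_shift 1 (alt_cover_periodic false)).
by apply: eq_bigr => k _; rewrite addn1.
Qed.

Lemma alt_cover_enum : min_cover_enum m alt_cover.
Proof.
split.
- by move=> a; split; [exact: alt_cover_periodic | exact: alt_cover_covering |
    exact: alt_cover_weight].
- by move=> a b /(_ 0); rewrite /alt_cover /= !addbF.
- by move=> f mf; exists (f 0); exact: (min_cover_even m_gt0 m_even mf).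
Qed.

End EvenPeriod.

Lemma gamma_t_eq (T : finType) (adj : rel T) (D0 : {set T}) :
  total_dominating adj D0 -> (forall D, total_dominating adj D -> #|D0| <= #|D|) ->
  gamma_t adj = #|D0|.
Proof.
move=> tdD0 minD0; apply/eqP; rewrite eqn_leq; apply/andP; split.
  exact: geq_bigmin_cond.
apply: (big_ind (fun x => #|D0| <= x)) => //; first exact: max_card.
by move=> x y; rewrite leq_min => -> ->.
Qed.

Lemma tau_eq_card (T I : finType) (adj : rel T) (G : I -> {set T}) (g : nat) (i0 : I) :
  injective G -> (forall i, total_dominating adj (G i) /\ #|G i| = g) ->
  (forall D, total_dominating adj D -> g <= #|D|) ->
  (forall D, total_dominating adj D -> #|D| = g -> exists i, D = G i) ->
  tau adj = #|I|.
Proof.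
move=> G_inj G_min lb G_all; have [td0 card0] := G_min i0.
have gamma_g : gamma_t adj = g.
  by rewrite (gamma_t_eq td0) ?card0 // => D /lb; rewrite card0.
rewrite /tau -(card_imset predT G_inj); apply: eq_card => D.
rewrite !inE /gamma_t_set gamma_g.
apply/andP/imsetP => [[tdD /eqP /(G_all D tdD) [i ->]] | [i _ ->]]; first by exists i.
by have [] := G_min i; split=> //; apply/eqP.
Qed.

Section CycleSets.
Variable n : nat.
Implicit Type D : {set 'I_n}.

Definition in_modn D v := [exists u in D, u == v %% n :> nat].

Lemma in_modn_ord D (u : 'I_n) : in_modn D u = (u \in D).
Proof.
apply/existsP/idP => [[u' /andP [u'D /eqP]]|uD].
  by rewrite (modn_small (ltn_ord u)) => /val_inj <-.
by exists u; rewrite uD (modn_small (ltn_ord u)) /=.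
Qed.

Lemma in_modn_periodic D : periodic n (in_modn D).
Proof. by move=> k; rewrite /in_modn modn_mod. Qed.

Lemma in_modn_set (P : nat -> bool) w :
  0 < n -> in_modn [set v : 'I_n | P v] w = P (w %% n).
Proof.
move=> n_gt0; apply/existsP/idP => [[u /andP [uP /eqP <-]] | Pw].
  by rewrite inE in uP.
by exists (Ordinal (ltn_pmod w n_gt0)); rewrite inE /= Pw eqxx.
Qed.

Lemma card_in_modn D : #|D| = weight n (in_modn D).
Proof.
rewrite -sum1_card big_mkcond; apply: eq_bigr => v _.
by rewrite in_modn_ord; case: (v \in D).
Qed.

Lemma in_modn_inj D D' : in_modn D =1 in_modn D' -> D = D'.
Proof. by move=> eqDD'; apply/setP => u; rewrite -!in_modn_ord eqDD'. Qed.

Lemma cycle_adj_succ (n_gt0 : 0 < n) v (u : 'I_n) :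
  cycle_adj n (Ordinal (ltn_pmod v.+1 n_gt0)) u =
    (u == v.+2 %% n :> nat) || (u == v %% n :> nat).
Proof.
rewrite /cycle_adj /=; congr (_ || _); first by rewrite -addn1 modnDml addn1.
by rewrite -addn1 -[u.+1]addn1 eqn_modDr (modn_small (ltn_ord u)) eq_sym.
Qed.

Lemma total_dominating_cycleE D : 0 < n ->
  total_dominating (cycle_adj n) D <-> forall v, in_modn D v || in_modn D v.+2.
Proof.
move=> n_gt0.
have dominated v : [exists u in D, cycle_adj n (Ordinal (ltn_pmod v.+1 n_gt0)) u] =
                   in_modn D v || in_modn D v.+2.
  apply/exists_inP/orP => [[u uD] | [] /exists_inP [u uD uv]].
  - by rewrite cycle_adj_succ => /orP [] uv; [right | left]; apply/exists_inP; exists u.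
  - by exists u; rewrite // cycle_adj_succ uv orbT.
  - by exists u; rewrite // cycle_adj_succ uv.
split=> [/forallP tdD v | covD]; first by rewrite -dominated.
apply/forallP => x; have -> : x = Ordinal (ltn_pmod (x + n.-1).+1 n_gt0).
  by apply: val_inj; rewrite /= -addnS prednK // modnDr modn_small.
by rewrite dominated covD.
Qed.

End CycleSets.

Section OddCycle.
Variable n : nat.
Hypothesis n_odd : odd n.
Let n_gt0 : 0 < n := odd_gt0 n_odd.
Implicit Types (D : {set 'I_n}) (f : nat -> bool).

Lemma double_uphalf : 2 * uphalf n = n.+1.
Proof. by rewrite uphalf_half n_odd; have := odd_double_half n; rewrite n_odd; lia. Qed.

Lemma uphalf_inv_double k : 2 * k * uphalf n = k %[mod n].
Proof. by rewrite mulnAC double_uphalf mulSn addnC mulnC modnMDl. Qed.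

Definition dilate D k := in_modn D (2 * k).
Definition undilate f := [set v : 'I_n | f (v * uphalf n)].

Lemma dilate_periodic D : periodic n (dilate D).
Proof. by move=> k; apply: periodic_eqmod (in_modn_periodic D) _; rewrite modnMmr. Qed.

Lemma in_modn_dilate D v : in_modn D v = dilate D (v * uphalf n).
Proof.
by apply: periodic_eqmod (in_modn_periodic D) _; rewrite mulnA uphalf_inv_double.
Qed.

Lemma weight_dilate D : weight n (dilate D) = #|D|.
Proof.
pose dbl (k : 'I_n) := Ordinal (ltn_pmod (2 * k) n_gt0).
have dbl_inj : injective dbl.
  move=> k k' /(congr1 (fun v : 'I_n => v * uphalf n %% n)) /=.
  by rewrite !modnMml !uphalf_inv_double !modn_small // => /val_inj.
rewrite card_in_modn /weight [RHS](reindex_inj dbl_inj).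
by apply: eq_bigr => k _; rewrite /= -in_modn_periodic.
Qed.

Lemma total_dominating_dilate D :
  total_dominating (cycle_adj n) D <-> covering (dilate D).
Proof.
rewrite total_dominating_cycleE //; split=> [covD k | covD v].
  by rewrite /dilate mulnS add2n.
rewrite !in_modn_dilate.
have -> : dilate D (v.+2 * uphalf n) = dilate D (v * uphalf n).+1.
  apply: periodic_eqmod (dilate_periodic D) _.
  by rewrite -addn2 mulnDl double_uphalf addnS -addSn modnDr.
exact: covD.
Qed.

Lemma dilate_undilate f : periodic n f -> dilate (undilate f) =1 f.
Proof.
move=> Pf k; rewrite /dilate (in_modn_set (fun v => f (v * uphalf n))) //.
by apply: periodic_eqmod Pf _; rewrite modnMml uphalf_inv_double.
Qed.

Lemma dilate_inj D D' : dilate D =1 dilate D' -> D = D'.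
Proof. by move=> eqDD'; apply: in_modn_inj => v; rewrite !in_modn_dilate eqDD'. Qed.

Lemma tau_odd_cycle (I : finType) (Phi : I -> nat -> bool) (i0 : I) :
  min_cover_enum n Phi -> tau (cycle_adj n) = #|I|.
Proof.
case=> Phi_min Phi_inj Phi_all.
have dilateG i : dilate (undilate (Phi i)) =1 Phi i.
  by have [Pi _ _] := Phi_min i; apply: dilate_undilate.
apply: (tau_eq_card (G := fun i => undilate (Phi i)) (g := uphalf n) i0).
- by move=> i j /(congr1 dilate) eqij; apply: Phi_inj => k; rewrite -!dilateG eqij.
- move=> i; have [_ Ci Wi] := Phi_min i; split.
    by apply/total_dominating_dilate => k; rewrite !dilateG.
  by rewrite -weight_dilate -Wi; apply: eq_bigr => k _; rewrite dilateG.
- move=> D /total_dominating_dilate covD; rewrite -weight_dilate.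
  exact: covering_weight_lb (dilate_periodic D) covD.
- move=> D /total_dominating_dilate covD cardD.
  have [i Di] : exists i, dilate D =1 Phi i.
    by apply: Phi_all; split; rewrite ?weight_dilate //; exact: dilate_periodic.
  by exists i; apply: dilate_inj => k; rewrite Di dilateG.
Qed.

End OddCycle.

Section EvenCycle.
Variable m : nat.
Hypothesis m_gt0 : 0 < m.
Let n_gt0 : 0 < m.*2. Proof. by rewrite double_gt0. Qed.
Implicit Types (D : {set 'I_m.*2}) (e o : nat -> bool).

Definition evens D k := in_modn D (2 * k).
Definition odds D k := in_modn D (2 * k).+1.
Definition interleave e o := [set v : 'I_m.*2 | if odd v then o v./2 else e v./2].

Lemma evens_periodic D : periodic m (evens D).
Proof.
move=> k; apply: periodic_eqmod (in_modn_periodic D) _.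
by rewrite muln_modr -mul2n modn_mod.
Qed.

Lemma odds_periodic D : periodic m (odds D).
Proof.
move=> k; apply: periodic_eqmod (in_modn_periodic D) _.
by rewrite muln_modr -mul2n -addn1 -[((2 * k) %% _).+1]addn1 modnDml.
Qed.

Lemma card_evens_odds D : #|D| = weight m (evens D) + weight m (odds D).
Proof.
by rewrite card_in_modn /weight (sum_ord_double m (fun v => in_modn D v : nat)).
Qed.

Lemma total_dominating_evens_odds D :
  total_dominating (cycle_adj m.*2) D <-> covering (evens D) /\ covering (odds D).
Proof.
rewrite total_dominating_cycleE //; split=> [covD | [covE covO] v].
  by split=> k; rewrite /evens /odds mulnS add2n; apply: covD.
rewrite -(odd_double_half v) -[v./2.*2]mul2n.
case: (odd v); [have := covO v./2 | have := covE v./2];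
  by rewrite /odds /evens mulnS add2n ?add1n ?add0n.
Qed.

Lemma in_modn_interleave e o w : periodic m e -> periodic m o ->
  in_modn (interleave e o) w = if odd w then o w./2 else e w./2.
Proof.
move=> Pe Po; rewrite (in_modn_set (fun v => if odd v then o v./2 else e v./2)) //.
rewrite odd_mod ?odd_double // -divn2 -muln2 -modn_divl divn2.
by case: (odd w); rewrite -?Po -?Pe.
Qed.

Lemma evens_interleave e o : periodic m e -> periodic m o -> evens (interleave e o) =1 e.
Proof.
by move=> Pe Po k; rewrite /evens in_modn_interleave // mul2n odd_double doubleK.
Qed.

Lemma odds_interleave e o : periodic m e -> periodic m o -> odds (interleave e o) =1 o.
Proof.
by move=> Pe Po k; rewrite /odds in_modn_interleave // mul2n /= odd_double uphalf_double.
Qed.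

Lemma evens_odds_inj D D' : evens D =1 evens D' -> odds D =1 odds D' -> D = D'.
Proof.
move=> eqE eqO; apply: in_modn_inj => v; rewrite -(odd_double_half v) -[v./2.*2]mul2n.
by case: (odd v); [apply: eqO | apply: eqE].
Qed.

Lemma tau_even_cycle (I : finType) (Phi : I -> nat -> bool) (i0 : I) :
  min_cover_enum m Phi -> tau (cycle_adj m.*2) = #|I| ^ 2.
Proof.
case=> Phi_min Phi_inj Phi_all; rewrite -mulnn -card_prod.
have Phi_per i : periodic m (Phi i) by have [] := Phi_min i.
pose G (x : I * I) := interleave (Phi x.1) (Phi x.2).
have evensG x : evens (G x) =1 Phi x.1 by apply: evens_interleave.
have oddsG x : odds (G x) =1 Phi x.2 by apply: odds_interleave.
apply: (tau_eq_card (G := G) (g := (uphalf m).*2) (i0, i0)).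
- move=> [a b] [a' b'] eqG; congr (_, _); apply: Phi_inj => k.
    by rewrite -(evensG (a, b)) eqG evensG.
  by rewrite -(oddsG (a, b)) eqG oddsG.
- move=> x; have [_ C1 W1] := Phi_min x.1; have [_ C2 W2] := Phi_min x.2; split.
    by apply/total_dominating_evens_odds; split=> k; rewrite ?evensG ?oddsG.
  rewrite card_evens_odds -addnn -{1}W1 -W2.
  by congr (_ + _); apply: eq_bigr => k _; rewrite ?evensG ?oddsG.
- move=> D /total_dominating_evens_odds [covE covO]; rewrite card_evens_odds -addnn.
  exact: leq_add (covering_weight_lb (evens_periodic D) covE)
                 (covering_weight_lb (odds_periodic D) covO).
- move=> D /total_dominating_evens_odds [covE covO].
  have lbE := covering_weight_lb (evens_periodic D) covE.
  have lbO := covering_weight_lb (odds_periodic D) covO.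
  rewrite card_evens_odds -addnn => cardD.
  have [i Ei] : exists i, evens D =1 Phi i.
    by apply: Phi_all; split; [exact: evens_periodic | done | lia].
  have [j Oj] : exists j, odds D =1 Phi j.
    by apply: Phi_all; split; [exact: odds_periodic | done | lia].
  by exists (i, j); apply: evens_odds_inj => k; rewrite ?Ei ?Oj ?evensG ?oddsG.
Qed.

End EvenCycle.

Theorem theorem4p1 (n : nat) (hn : 3 <= n) :
  tau (cycle_adj n) =
    if n %% 4 == 0 then 4
    else if n %% 4 == 2 then (n %/ 2) ^ 2
    else n.
Proof.
have n_eq := odd_double_half n; set m := n./2 in n_eq.
have [n_odd | n_even] := boolP (odd n).
  rewrite (tau_odd_cycle n_odd (Ordinal (odd_gt0 n_odd)) (odd_cover_enum n_odd)) card_ord.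
  by rewrite n_odd in n_eq; case: eqP => [|_]; [lia | case: eqP => //; lia].
rewrite (negbTE n_even) add0n in n_eq.
have m_gt0 : 0 < m by lia.
have m_eq := odd_double_half m.
have -> : n %/ 2 = m by rewrite -n_eq divn2 doubleK.
have -> : tau (cycle_adj n) = tau (cycle_adj m.*2) by rewrite n_eq.
have [m_odd | m_even] := boolP (odd m).
  rewrite (tau_even_cycle m_gt0 (Ordinal (odd_gt0 m_odd)) (odd_cover_enum m_odd)).
  rewrite card_ord.
  by rewrite m_odd in m_eq; have -> : n %% 4 = 2 by lia.
rewrite (tau_even_cycle m_gt0 true (alt_cover_enum m_gt0 m_even)) card_bool.
by rewrite (negbTE m_even) in m_eq; have -> : n %% 4 = 0 by lia.
Qed.
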